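(* Let $\{G_i\}$ be a family of connected graphs with common induced subgraph $J$, embedded as $J_i\subseteq G_i$, and let $H=\amalg\{(G_i|J_i)\}$. If $a\in V(H)$ and $uv\in\parallel(J_i:G_i)$ satisfy $d_H(a,u)\neq d_H(a,v)$, then $a\in V(G_i-J_i)$.
   Context: All graphs are finite, simple, non-null and connected; $d_G$ is shortest-path distance in $G$. $J$ is a common induced subgraph of each $G_i$ via injective maps $\iota_i:V(J)\to V(G_i)$ with $\iota_i(x)\iota_i(y)\in E(G_i)$ iff $xy\in E(J)$; $J_i$ is the subgraph of $G_i$ induced by $\iota_i(V(J))$. The $J$-amalgamation $H=\amalg\{(G_i|J_i)\}$ is obtained from the disjoint union of the $G_i$ by identifying, for each $x\in V(J)$, all vertices $\iota_i(x)$ into a single vertex; each $G_i$ is regarded as a subgraph of $H$, so $V(H)=V(J)\cup\bigcup_iV(G_i-J_i)$. $\parallel(J_i:G_i)$ denotes the set of edges $uv$ of $G_i-J_i$ (both ends outside $V(J_i)$) such that $d_{G_i}(w,u)=d_{G_i}(w,v)$ for every $w\in V(J_i)$. *)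

From mathcomp Require Import all_boot.
Set Implicit Arguments. Unset Strict Implicit. Unset Printing Implicit Defensive.

Record graph := Graph { gV : finType; gE : rel gV }.
Arguments gE : clear implicits.

Definition simple_graph (G : graph) : Prop :=
  symmetric (gE G) /\ irreflexive (gE G).

Definition connected_graph (G : graph) : Prop :=
  (0 < #|gV G|)%N /\ forall x y : gV G, connect (gE G) x y.

Definition walkn (G : graph) (n : nat) (x y : gV G) : bool :=
  [exists p : n.-tuple (gV G), path (gE G) x p && (last x p == y)].
Arguments walkn : clear implicits.

(* shortest-path distance d_G(x,y): least n with a walk of length n
   (equals #|V| when y is unreachable, which never happens in a connected graph) *)
Definition dist (G : graph) (x y : gV G) : nat :=
  find (fun n => walkn G n x y) (iota 0 #|gV G|).
Arguments dist : clear implicits.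

Definition induced_emb (J G : graph) (f : gV J -> gV G) : Prop :=
  injective f /\ forall x y, gE G (f x) (f y) = gE J x y.

Definition parallel_edge (J G : graph) (f : gV J -> gV G) (u v : gV G) : bool :=
  [&& u \notin codom f, v \notin codom f, gE G u v &
      [forall x : gV J, dist G (f x) u == dist G (f x) v]].

(* Vertices of the J-amalgamation: V(J) together with, for each i, the
   vertices of G_i - J_i. *)
Definition amal_V (I : finType) (J : graph) (G : I -> graph)
  (f : forall i, gV J -> gV (G i)) : finType :=
  (gV J + {i : I & {v : gV (G i) | v \notin codom (f i)}})%type.

(* The image in H of a vertex of G_i (G_i regarded as a subgraph of H). *)
Definition amal_emb (I : finType) (J : graph) (G : I -> graph)
  (f : forall i, gV J -> gV (G i)) (i : I) (v : gV (G i)) : amal_V f :=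
  (if v \in codom (f i) as b return (v \in codom (f i)) = b -> amal_V f
   then fun h => inl (iinv h)
   else fun h => inr (Tagged (fun i => {v : gV (G i) | v \notin codom (f i)})
                             (exist _ v (negbT h))))
  (erefl _).

Definition amalgam (I : finType) (J : graph) (G : I -> graph)
  (f : forall i, gV J -> gV (G i)) : graph :=
  @Graph (amal_V f)
    (fun a b => [exists i, exists v : gV (G i), exists w : gV (G i),
       [&& amal_emb f v == a, amal_emb f w == b & gE (G i) v w]]).

From mathcomp Require Import all_boot.
Set Implicit Arguments. Unset Strict Implicit. Unset Printing Implicit Defensive.

(** If [a] is not a vertex of [G_i - J_i], every walk in [H] from [a] into
    [G_i - J_i] enters it from some vertex [x] of [J] and then stays inside
    [G_i]. A shortest walk from [a] to [v] thus has length [d_H(a,x) + k] with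
    [k >= d_{G_i}(x,v) = d_{G_i}(x,u)], and replacing its final segment by a
    shortest walk from [x] to [u] gives [d_H(a,u) <= d_H(a,v)]. Exchanging [u]
    and [v] yields equality. *)

Section Distance.

Variable G : graph.
Implicit Types (x y z : gV G) (m n : nat).

Lemma walknP n x y :
  reflect (exists s, [/\ size s = n, path (gE G) x s & last x s = y])
          (walkn G n x y).
Proof.
apply: (iffP existsP) => [[p /andP[hp /eqP hl]]|[s [hs hp hl]]].
  by exists (val p); rewrite size_tuple.
have hs' : size s == n by rewrite hs.
by exists (Tuple hs'); rewrite /= hp hl eqxx.
Qed.

Lemma walkn0 x y : walkn G 0 x y = (x == y).
Proof.
apply/walknP/eqP => [[s [/size0nil -> _ <-]] //|<-].
by exists [::].
Qed.

Lemma walknSr n x z : walkn G n.+1 x z = [exists y, walkn G n x y && gE G y z].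
Proof.
apply/walknP/existsP => [[s [hs hp hl]]|[y /andP[/walknP[s [hs hp hl]] e]]].
  case/lastP: s hs hp hl => [//|s y]; rewrite size_rcons rcons_path last_rcons.
  move=> [hs] /andP[hp e] <-; exists (last x s); rewrite e andbT.
  by apply/walknP; exists s.
by exists (rcons s z); rewrite size_rcons rcons_path last_rcons hs hp hl e.
Qed.

Lemma walkn_cat m n x y z : walkn G m x y -> walkn G n y z -> walkn G (m + n) x z.
Proof.
move=> hxy; elim: n z => [|n IH] z; first by rewrite walkn0 addn0 => /eqP <-.
rewrite addnS !walknSr => /existsP[t /andP[/IH ht e]].
by apply/existsP; exists t; rewrite ht.
Qed.

Lemma dist_le_card x y : dist G x y <= #|gV G|.
Proof. by have := find_size (fun n => walkn G n x y) (iota 0 #|gV G|); rewrite size_iota. Qed.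

Lemma dist_le n x y : walkn G n x y -> dist G x y <= n.
Proof.
move=> hw; case: (ltnP n #|gV G|) => hn; last exact: leq_trans (dist_le_card x y) hn.
rewrite leqNgt; apply/negP => /(before_find 0).
by rewrite nth_iota //= hw.
Qed.

Lemma dist_walkn_or_card x y :
  walkn G (dist G x y) x y \/ dist G x y = #|gV G|.
Proof.
rewrite /dist; case: (boolP (has (fun n => walkn G n x y) (iota 0 #|gV G|))) => [hw|/hasNfind->]; last first.
  by right; rewrite size_iota.
left; have := nth_find 0 hw.
by rewrite nth_iota // -[X in _ < X](size_iota 0 #|gV G|) -has_find.
Qed.

Lemma walkn_dist n x y : walkn G n x y -> walkn G (dist G x y) x y.
Proof.
case/walknP => s [_ hp hl]; case: (shortenP hp) hl => s' hp' hu _ hl.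
have hs' : size s' < #|gV G|.
  by rewrite -ltnS -[(size s').+1]/(size (x :: s')) -(card_uniqP hu) ltnS max_card.
have hw : walkn G (size s') x y by apply/walknP; exists s'.
case: (dist_walkn_or_card x y) => // hcard.
by have := dist_le hw; rewrite hcard leqNgt hs'.
Qed.

End Distance.

Section Amalgam.

Variables (I : finType) (J : graph) (G : I -> graph) (f : forall i, gV J -> gV (G i)).
Hypothesis f_inj : forall i, injective (f i).

Local Notation H := (amalgam f).

Definition outside i := {v : gV (G i) | v \notin codom (f i)}.

Variant amal_emb_spec i (v : gV (G i)) : amal_V f -> Type :=
  | AmalEmbJ (h : v \in codom (f i)) : amal_emb_spec v (inl (iinv h))
  | AmalEmbOut (h : v \notin codom (f i)) :
      amal_emb_spec v (inr (Tagged outside (exist _ v h))).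

Lemma amal_embP i (v : gV (G i)) : amal_emb_spec v (amal_emb f v).
Proof.
(* Abstract the test of the dependent match together with the index of its
   equality proof. *)
rewrite /amal_emb; move: (erefl (v \in codom (f i))).
by case: {2 3}(v \in codom (f i)) => h; constructor.
Qed.

Lemma amal_emb_f i x : amal_emb f (f i x) = inl x.
Proof.
case: (amal_embP (f i x)) => [h|/negP[]]; last exact: codom_f.
by rewrite (f_inj (f_iinv h)).
Qed.

Lemma amal_emb_tag j (w : gV (G j)) i (v : gV (G i)) :
  v \notin codom (f i) -> amal_emb f w = amal_emb f v -> j = i.
Proof.
case: (amal_embP v) => [h /negP[] //|hv _].
by case: (amal_embP w) => // _ [].
Qed.

Lemma amal_emb_inj i : injective (@amal_emb I J G f i).
Proof.
move=> w v; case: (amal_embP v) => hv; case: (amal_embP w) => hw //.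
  by case=> /(congr1 (f i)); rewrite !f_iinv.
by case=> E; apply: eq_from_Tagged E.
Qed.

Lemma amal_edge i (v w : gV (G i)) :
  gE (G i) v w -> gE H (amal_emb f v) (amal_emb f w).
Proof.
move=> e; apply/existsP; exists i; apply/existsP; exists v; apply/existsP; exists w.
by rewrite !eqxx e.
Qed.

Lemma amal_walkn i n (x y : gV (G i)) :
  walkn (G i) n x y -> walkn H n (amal_emb f x) (amal_emb f y).
Proof.
elim: n y => [|n IH] y; first by rewrite !walkn0 => /eqP->.
rewrite !walknSr => /existsP[t /andP[/IH ht e]].
by apply/existsP; exists (amal_emb f t); rewrite ht amal_edge.
Qed.

Lemma amal_edge_to_outside i (w : gV (G i)) b :
  w \notin codom (f i) -> gE H b (amal_emb f w) ->
  exists2 w', b = amal_emb f w' & gE (G i) w' w.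
Proof.
move=> hw /existsP[j /existsP[v1 /existsP[w1 /and3P[/eqP <- /eqP E e]]]].
have ej := amal_emb_tag hw E; subst j.
by move/amal_emb_inj: E e => -> e; exists v1.
Qed.

Section Outside.

Variables (i : I) (a : gV H).
Hypothesis a_not_outside : forall w, w \notin codom (f i) -> a != amal_emb f w.

Lemma walkn_to_outside n w :
  w \notin codom (f i) -> walkn H n a (amal_emb f w) ->
  exists x k, [/\ k <= n, walkn H (n - k) a (inl x) & walkn (G i) k (f i x) w].
Proof.
elim: n w => [|n IH] w hw.
  by rewrite walkn0 (negbTE (a_not_outside hw)).
rewrite walknSr => /existsP[b /andP[hab /(amal_edge_to_outside hw)[w' eb e]]].
subst b; case: (boolP (w' \in codom (f i))) => [/codomP[x ew']|hw'].
  subst w'; exists x, 1; split => //; first by rewrite subn1 -(amal_emb_f i).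
  by rewrite walknSr; apply/existsP; exists (f i x); rewrite walkn0 eqxx.
case: (IH w' hw' hab) => x [k [hk h1 h2]]; exists x, k.+1; split => //.
by rewrite walknSr; apply/existsP; exists w'; rewrite h2.
Qed.

Lemma dist_amal_le_parallel (u v : gV (G i)) :
  v \notin codom (f i) -> gE (G i) v u ->
  (forall x, dist (G i) (f i x) u = dist (G i) (f i x) v) ->
  dist H a (amal_emb f u) <= dist H a (amal_emb f v).
Proof.
move=> hv e hpar.
case: (dist_walkn_or_card a (amal_emb f v)) => [hw|->]; last exact: dist_le_card.
set n := dist H a (amal_emb f v) in hw *.
case: (walkn_to_outside hv hw) => x [k [hk h1 h2]].
have hxu : walkn (G i) k.+1 (f i x) u.
  by rewrite walknSr; apply/existsP; exists v; rewrite h2 e.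
have dxu : dist (G i) (f i x) u <= k by rewrite hpar (dist_le h2).
apply: (@leq_trans (n - k + dist (G i) (f i x) u)).
  apply: dist_le; apply: walkn_cat h1 _.
  by rewrite -(amal_emb_f i x); apply: amal_walkn; apply: walkn_dist hxu.
by rewrite -[leqRHS](subnK hk) leq_add2l.
Qed.

End Outside.

End Amalgam.

Theorem lemma1 (I : finType) (J : graph) (G : I -> graph)
  (f : forall i, gV J -> gV (G i))
  (hJ : simple_graph J) (hJc : connected_graph J)
  (hG : forall i, simple_graph (G i)) (hGc : forall i, connected_graph (G i))
  (hf : forall i, induced_emb (f i))
  (a : gV (amalgam f)) (i : I) (u v : gV (G i))
  (huv : parallel_edge (f i) u v)
  (hd : dist (amalgam f) a (amal_emb f u) <> dist (amalgam f) a (amal_emb f v)) :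
  exists2 w : gV (G i), w \notin codom (f i) & a = amal_emb f w.
Proof.
have f_inj j : injective (f j) by case: (hf j).
case/and4P: huv => hu hv e /forallP hpar.
case: (boolP [exists w, (w \notin codom (f i)) && (a == amal_emb f w)]).
  by case/existsP=> w /andP[hw /eqP->]; exists w.
move/existsPn=> ha; have {}ha w : w \notin codom (f i) -> a != amal_emb f w.
  by move=> hw; move: (ha w); rewrite hw.
case: hd; apply/eqP; rewrite eqn_leq !dist_amal_le_parallel //.
- by move=> x; apply/eqP; rewrite eq_sym hpar.
- by rewrite (proj1 (hG i)).
- by move=> x; apply/eqP; rewrite hpar.
Qed.
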